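(* Let $m,n$ be positive integers and let $u\in\{1,s_0,\dots,s_{m-1},t_1,\dots,t_{n-2}\}$. Then $$\deg_u(1)\le\deg_u(x_1)\le\dots\le\deg_u(x_{m-1})\le\deg_u(y_1)\le\dots\le\deg_u(y_{n-1})\le\deg_u(x_1y_1)\le\deg_u(x_1y_2)\le\dots\le\deg_u(x_1y_{n-1})\le\deg_u(x_2y_1)\le\dots\le\deg_u(x_{m-1}y_{n-1}).$$
   Context: Variables $s_0,\dots,s_{m-1},t_1,\dots,t_{n-2}$; $T=t_1\cdots t_{n-2}$. Monomials $x_i=s_1s_2\cdots s_i\,T^i$ for $1\le i\le m-1$ and $y_j=s_0s_1\cdots s_{m-1}\,T^{m-1}\,t_1\cdots t_{j-1}$ for $1\le j\le n-1$. For a monomial $M$ and a variable $u$, $\deg_u(M)$ is the exponent of $u$ in $M$ (and $\deg_1(M)$ is taken to be $0$). The products $x_iy_j$ are listed in lexicographic order of $(i,j)$. *)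

From mathcomp Require Import all_boot.
Set Implicit Arguments. Unset Strict Implicit. Unset Printing Implicit Defensive.

Inductive var := sv of nat | tv of nat.

(* A monomial is represented by its exponent vector: M v = deg_v(M). *)
Definition monom := var -> nat.
Definition mone : monom := fun _ => 0.
Definition mmul (a b : monom) : monom := fun v => a v + b v.
Definition mvar (v : var) : monom := fun w =>
  match v, w with
  | sv i, sv j => nat_of_bool (i == j)
  | tv i, tv j => nat_of_bool (i == j)
  | _, _ => 0
  end.
Definition mprod (s : seq monom) : monom := foldr mmul mone s.
Definition mpow (a : monom) (e : nat) : monom := mprod (nseq e a).

Definition Tm (n : nat) : monom := mprod [seq mvar (tv l) | l <- iota 1 (n - 2)].
Definition xm (n i : nat) : monom :=
  mmul (mprod [seq mvar (sv k) | k <- iota 1 i]) (mpow (Tm n) i).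
Definition ym (m n j : nat) : monom :=
  mmul (mmul (mprod [seq mvar (sv k) | k <- iota 0 m]) (mpow (Tm n) (m - 1)))
       (mprod [seq mvar (tv l) | l <- iota 1 (j - 1)]).

(* deg_u; u = None stands for the "variable" 1, with deg_1 = 0 *)
Definition deg (u : option var) (M : monom) : nat :=
  match u with None => 0 | Some v => M v end.

Definition chain (m n : nat) : seq monom :=
  [:: mone] ++ [seq xm n i | i <- iota 1 (m - 1)]
  ++ [seq ym m n j | j <- iota 1 (n - 1)]
  ++ flatten [seq [seq mmul (xm n i) (ym m n j) | j <- iota 1 (n - 1)]
             | i <- iota 1 (m - 1)].

(** Every monomial of the chain is [x_i], [y_j] or [x_i y_j], so its degree in
    a fixed [u] is [f i], [g j] or [f i + g j] with [f i = deg_u x_i] and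
    [g j = deg_u y_j].  For [u = s_k] one finds [f i = [1 <= k <= i]] and
    [g j = 1]; for [u = t_l] one finds [f i = i] and [g j = m - 1 + [l < j]].
    In both cases [f] and [g] are nondecreasing, [f <= g], [g j <= f i + g j']
    (the jump of [g] is at most [1 <= f i]) and [f i + g j <= f i' + g j'] for
    [i < i'], which are exactly the comparisons needed along the lexicographic
    chain. *)

From mathcomp Require Import all_boot zify.

Lemma mmulE (a b : monom) v : mmul a b v = a v + b v.
Proof. by []. Qed.

Lemma mprodE s v : mprod s v = sumn [seq M v | M <- s].
Proof. by elim: s => //= a s IH; rewrite mmulE IH. Qed.

Lemma mpowE a e v : mpow a e v = e * a v.
Proof. rewrite /mpow mprodE; elim: e => //= e ->; lia. Qed.

Lemma sumn_indicator_iota a b k :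
  sumn [seq nat_of_bool (i == k) | i <- iota a b] = (a <= k < a + b).
Proof.
elim: b a => [|b IH] a /=; first by rewrite addn0; case: leqP => //= a_le_k; lia.
by rewrite IH; case: eqP => [->|i_neq_k] /=; lia.
Qed.

Lemma sumn_zero_iota a b : sumn [seq 0 | i <- iota a b] = 0.
Proof. by elim: b a => //= b IH a; rewrite IH. Qed.

Lemma Tm_sv n k : Tm n (sv k) = 0.
Proof. by rewrite /Tm mprodE -map_comp sumn_zero_iota. Qed.

Lemma Tm_tv n l : Tm n (tv l) = (1 <= l < 1 + (n - 2)).
Proof. by rewrite /Tm mprodE -map_comp sumn_indicator_iota. Qed.

Lemma xm_sv n i k : xm n i (sv k) = (1 <= k < 1 + i).
Proof. by rewrite /xm mmulE mpowE Tm_sv muln0 addn0 mprodE -map_comp sumn_indicator_iota. Qed.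

Lemma xm_tv n i l : xm n i (tv l) = i * (1 <= l < 1 + (n - 2)).
Proof. by rewrite /xm mmulE mpowE Tm_tv mprodE -map_comp sumn_zero_iota. Qed.

Lemma ym_sv m n j k : ym m n j (sv k) = (k < m).
Proof.
by rewrite /ym !mmulE mpowE Tm_sv muln0 !mprodE -!map_comp sumn_zero_iota
  sumn_indicator_iota !addn0.
Qed.

Lemma ym_tv m n j l :
  ym m n j (tv l) = (m - 1) * (1 <= l < 1 + (n - 2)) + (1 <= l < 1 + (j - 1)).
Proof.
by rewrite /ym !mmulE mpowE Tm_tv !mprodE -!map_comp sumn_zero_iota
  sumn_indicator_iota.
Qed.

Lemma deg_mmul u a b : deg u (mmul a b) = deg u a + deg u b.
Proof. by case: u. Qed.

Definition lex_chain (f g : nat -> nat) (m n : nat) : seq nat :=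
  0 :: [seq f i | i <- iota 1 (m - 1)] ++ [seq g j | j <- iota 1 (n - 1)]
    ++ flatten [seq [seq f i + g j | j <- iota 1 (n - 1)] | i <- iota 1 (m - 1)].

Lemma deg_chain u m n :
  [seq deg u M | M <- chain m n] =
  lex_chain (fun i => deg u (xm n i)) (fun j => deg u (ym m n j)) m n.
Proof.
rewrite /chain /lex_chain /= !map_cat map_flatten -!map_comp.
congr (_ :: _ ++ _ ++ flatten _); first by case: u.
by apply: eq_map => i /=; rewrite -map_comp; apply: eq_map => j /=; rewrite deg_mmul.
Qed.

Lemma pairwise_iota (r : rel nat) a b :
  (forall i j, a <= i -> i < j -> j < a + b -> r i j) -> pairwise r (iota a b).
Proof.
elim: b a => [|b IH] a r_iota //=; apply/andP; split.
  by apply/allP => j; rewrite mem_iota => /andP[? ?]; apply: r_iota; lia.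
by apply: IH => i j *; apply: r_iota; lia.
Qed.

Lemma mem_map_iota1 (h : nat -> nat) k z :
  z \in [seq h i | i <- iota 1 (k - 1)] -> exists2 i, 0 < i < k & z = h i.
Proof. by move=> /mapP[i]; rewrite mem_iota => ? ->; exists i => //; lia. Qed.

Section LexChain.

Variables (f g : nat -> nat) (m n : nat).

Hypothesis f_mono : forall i i', 0 < i <= i' -> i' < m -> f i <= f i'.
Hypothesis f_le_g : forall i j, 0 < i < m -> 0 < j < n -> f i <= g j.
Hypothesis g_mono : forall j j', 0 < j <= j' -> j' < n -> g j <= g j'.
Hypothesis g_le_fg :
  forall i j j', 0 < i < m -> 0 < j < n -> 0 < j' < n -> g j <= f i + g j'.
Hypothesis fg_lex : forall i i' j j', 0 < i < i' -> i' < m ->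
  0 < j < n -> 0 < j' < n -> f i + g j <= f i' + g j'.

Let products := flatten [seq [seq f i + g j | j <- iota 1 (n - 1)] | i <- iota 1 (m - 1)].

Lemma mem_products z :
  z \in products -> exists i j, [/\ 0 < i < m, 0 < j < n & z = f i + g j].
Proof.
move=> /flatten_mapP[i]; rewrite mem_iota => ? /mem_map_iota1[j ? ->].
by exists i, j; split => //; lia.
Qed.

Lemma pairwise_products_from a : 0 < a ->
  pairwise leq (flatten [seq [seq f i + g j | j <- iota 1 (n - 1)] | i <- iota a (m - a)]).
Proof.
move Ec : (m - a) => c; elim: c a Ec => [|c IH] a Ec a_gt0 //=.
rewrite pairwise_cat; apply/and3P; split.
- apply/allrelP => x y /mem_map_iota1[j ? ->] /flatten_mapP[i].
  by rewrite mem_iota => ? /mem_map_iota1[j' ? ->]; apply: fg_lex; lia.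
- rewrite pairwise_map; apply: pairwise_iota => j j' *.
  by rewrite /relpre /= leq_add2l; apply: g_mono; lia.
- by apply: IH; lia.
Qed.

Lemma sorted_lex_chain : sorted leq (lex_chain f g m n).
Proof.
apply: pairwise_sorted; rewrite pairwise_cons; apply/andP; split; first exact/allP.
rewrite !pairwise_cat !pairwise_map -/products; apply/and3P; split.
- rewrite allrel_catr; apply/andP; split; apply/allrelP => x y.
    by move=> /mem_map_iota1[i ? ->] /mem_map_iota1[j ? ->]; apply: f_le_g.
  move=> /mem_map_iota1[i ? ->] /mem_products[i' [j [? ? ->]]].
  by apply: leq_trans (leq_addl (f i') (g j)); apply: f_le_g.
- by apply: pairwise_iota => i i' *; apply: f_mono; lia.
- apply/and3P; split.
  + by apply/allrelP => x y /mem_map_iota1[j ? ->] /mem_products[i [j' [? ? ->]]]; apply: g_le_fg.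
  + by apply: pairwise_iota => j j' *; apply: g_mono; lia.
  + exact: pairwise_products_from.
Qed.

End LexChain.

Theorem mainTheorem18 (m n : nat) (u : option var) :
  0 < m -> 0 < n ->
  (u = None \/ (exists k, k < m /\ u = Some (sv k))
            \/ (exists l, 1 <= l <= n - 2 /\ u = Some (tv l))) ->
  sorted leq [seq deg u M | M <- chain m n].
Proof.
move=> m_gt0 n_gt0 hu; rewrite deg_chain.
case: hu => [->|[[k [k_lt_m ->]]|[l [l_range ->]]]].
- exact: sorted_lex_chain.
- by apply: sorted_lex_chain => /= *; rewrite ?xm_sv ?ym_sv; lia.
- by apply: sorted_lex_chain => /= *; rewrite ?xm_tv ?ym_tv; lia.
Qed.
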